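(* Let $K\ge 0$ be an integer and, for $k=0,1,\dots,K$, let $w_k=2^{k-K}$ and let $\mathcal{G}^k$ be a finite subset of the lattice $w_k\mathbb{Z}^3$, with a real coefficient $\lambda_{\boldsymbol{g}}$ attached to each $\boldsymbol{g}\in\mathcal{G}^k$ (points of different levels $k$ are treated as distinct even if they coincide in position). Define $f:\mathbb{R}^3\to\mathbb{R}$ by $$f(\boldsymbol{v})=\sum_{k=0}^K\sum_{\boldsymbol{g}\in\mathcal{G}^k}\lambda_{\boldsymbol{g}}\,\boldsymbol{B}\!\left(\frac{\boldsymbol{v}-\boldsymbol{g}}{w_k}\right),\qquad \boldsymbol{B}(x,y,z)=B(x)B(y)B(z),$$ where $B(t)=1+t$ for $t\in[-1,0]$, $B(t)=1-t$ for $t\in(0,1]$, and $B(t)=0$ otherwise. Let $\mathcal{M}\subset\mathbb{R}^3$ be a polygonal mesh surface, i.e. the union of finitely many non-degenerate triangles. Subdivide each triangle of $\mathcal{M}$ into finitely many non-degenerate sub-triangles, each of which is contained in a single depth-0 cell (a closed cube of the form $\prod_{i=1}^3[w_0a_i,w_0(a_i+1)]$ with $a_i\in\mathbb{Z}$). For each such sub-triangle $T$ with vertices $\boldsymbol{v}_1,\boldsymbol{v}_2,\boldsymbol{v}_3$, let $H_T(\alpha,\beta)=f\big(\boldsymbol{v}_1+\alpha(\boldsymbol{v}_2-\boldsymbol{v}_1)+\beta(\boldsymbol{v}_3-\boldsymbol{v}_1)\big)$ on $D=\{(\alpha,\beta):\alpha,\beta\ge0,\ \alpha+\beta\le1\}$,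 and let the candidate set $\boldsymbol{C}_T\subset T$ consist of: (1) the points of $T$ corresponding to $(\alpha,\beta)\in D$ with $\nabla_{(\alpha,\beta)}H_T(\alpha,\beta)=\boldsymbol{0}$; (2) the points on the three edges of $T$ at which the derivative of the restriction of $H_T$ to that edge (i.e. of the univariate function $\hat H_T(t)$ obtained by imposing $\alpha=0$, $\beta=0$, or $\alpha+\beta=1$) vanishes; and (3) the three vertices of $T$. Let $\mathcal{C}$ be the union of the sets $\boldsymbol{C}_T$ over all sub-triangles $T$, and set $$\epsilon_1=\min_{\boldsymbol{v}\in\mathcal{C}}f(\boldsymbol{v}),\qquad \epsilon_2=\max_{\boldsymbol{v}\in\mathcal{C}}f(\boldsymbol{v}).$$ Then the thin-shell space $\{\boldsymbol{x}\in\mathbb{R}^3:\epsilon_1\le f(\boldsymbol{x})\le\epsilon_2\}$ rigorously wraps $\mathcal{M}$, i.e. $\epsilon_1\le f(\boldsymbol{v})\le\epsilon_2$ for every $\boldsymbol{v}\in\mathcal{M}$.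
   Context: In the paper, $f$ is a first-degree tri-variate tensor-product B-spline defined on the grid points of a sparse voxel octree of height $K$ over the model (depth $0$ is the finest level, with cell width $2^{-K}$ for a model normalized to the unit box; depth $k$ has cell width $w_k$); its coefficients are obtained by fitting the signed distance function of $\mathcal{M}$ at the grid points, but the conclusion concerns only the function $f$ of the stated form. The ''thin shell'' of $\mathcal{M}$ is the region between the level sets $f=\epsilon_1$ and $f=\epsilon_2$. *)

From Stdlib Require Import Reals List ZArith.
Import ListNotations.
Open Scope R_scope.

Definition pt : Type := (R * R * R)%type.
Definition px (p : pt) : R := fst (fst p).
Definition py (p : pt) : R := snd (fst p).
Definition pz (p : pt) : R := snd p.
Definition padd (p q : pt) : pt := (px p + px q, py p + py q, pz p + pz q).
Definition psub (p q : pt) : pt := (px p - px q, py p - py q, pz p - pz q).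
Definition pscal (c : R) (p : pt) : pt := (c * px p, c * py p, c * pz p).
Definition cross (p q : pt) : pt :=
  (py p * pz q - pz p * py q, pz p * px q - px p * pz q, px p * py q - py p * px q).

Definition w (K k : nat) : R := / (2 ^ (K - k)).

Definition zpt : Type := (Z * Z * Z)%type.
Definition gridpt (c : R) (a : zpt) : pt :=
  (c * IZR (fst (fst a)), c * IZR (snd (fst a)), c * IZR (snd a)).

Definition B (t : R) : R :=
  if Rle_dec (-1) t then
    (if Rle_dec t 0 then 1 + t
     else if Rle_dec t 1 then 1 - t else 0)
  else 0.

Definition B3 (p : pt) : R := B (px p) * B (py p) * B (pz p).

(* f(v) = sum_{k=0}^K sum_{g in G^k} lambda_g B((v - g)/w_k);
   G k : list of integer coordinates a (the grid point is g = w_k a),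
   lam k a : coefficient of grid point w_k a of level k. *)
Definition fspl (K : nat) (G : nat -> list zpt) (lam : nat -> zpt -> R) (v : pt) : R :=
  sum_f_R0 (fun k =>
    fold_right (fun a acc =>
      lam k a * B3 (pscal (/ w K k) (psub v (gridpt (w K k) a))) + acc) 0 (G k)) K.

Definition tri : Type := (pt * pt * pt)%type.
Definition t1 (T : tri) : pt := fst (fst T).
Definition t2 (T : tri) : pt := snd (fst T).
Definition t3 (T : tri) : pt := snd T.

Definition tpar (T : tri) (al be : R) : pt :=
  padd (t1 T) (padd (pscal al (psub (t2 T) (t1 T))) (pscal be (psub (t3 T) (t1 T)))).

Definition inD (al be : R) : Prop := 0 <= al /\ 0 <= be /\ al + be <= 1.

Definition nondegenerate (T : tri) : Prop :=
  cross (psub (t2 T) (t1 T)) (psub (t3 T) (t1 T)) <> (0, 0, 0).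

Definition in_tri (T : tri) (p : pt) : Prop :=
  exists al be, inD al be /\ p = tpar T al be.

Definition in_tri_open (T : tri) (p : pt) : Prop :=
  exists al be, 0 < al /\ 0 < be /\ al + be < 1 /\ p = tpar T al be.

Definition in_depth0_cell (K : nat) (T : tri) : Prop :=
  exists a1 a2 a3 : Z, forall p, in_tri T p ->
    w K 0 * IZR a1 <= px p <= w K 0 * (IZR a1 + 1) /\
    w K 0 * IZR a2 <= py p <= w K 0 * (IZR a2 + 1) /\
    w K 0 * IZR a3 <= pz p <= w K 0 * (IZR a3 + 1).

Definition valid_subdivision (K : nat) (T : tri) (S : list tri) : Prop :=
  (forall T', In T' S -> nondegenerate T' /\ in_depth0_cell K T') /\
  (forall p, in_tri T p <-> exists T', In T' S /\ in_tri T' p) /\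
  (forall i j p, (i < length S)%nat -> (j < length S)%nat -> i <> j ->
     ~ (in_tri_open (nth i S T) p /\ in_tri_open (nth j S T) p)).

(* H has zero (Frechet) derivative at (al, be) relative to the domain D,
   i.e. grad H(al,be) = 0 for H considered on D. *)
Definition zero_grad_on_D (H : R -> R -> R) (al be : R) : Prop :=
  forall eps, 0 < eps -> exists del, 0 < del /\
    forall al' be', inD al' be' -> Rabs (al' - al) + Rabs (be' - be) < del ->
      Rabs (H al' be' - H al be) <= eps * (Rabs (al' - al) + Rabs (be' - be)).

(* h : [0,1] -> R has zero derivative at t (relative to [0,1]). *)
Definition zero_deriv_on_01 (h : R -> R) (t : R) : Prop :=
  forall eps, 0 < eps -> exists del, 0 < del /\
    forall s, 0 <= s <= 1 -> Rabs (s - t) < del ->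
      Rabs (h s - h t) <= eps * Rabs (s - t).

Definition candidate (F : pt -> R) (T : tri) (p : pt) : Prop :=
  let H := fun al be => F (tpar T al be) in
  (exists al be, inD al be /\ zero_grad_on_D H al be /\ p = tpar T al be) \/
  (exists t, 0 <= t <= 1 /\ zero_deriv_on_01 (fun s => H 0 s) t /\ p = tpar T 0 t) \/
  (exists t, 0 <= t <= 1 /\ zero_deriv_on_01 (fun s => H s 0) t /\ p = tpar T t 0) \/
  (exists t, 0 <= t <= 1 /\ zero_deriv_on_01 (fun s => H s (1 - s)) t /\
             p = tpar T t (1 - t)) \/
  p = t1 T \/ p = t2 T \/ p = t3 T.

(* The mesh: each triangle paired with its valid_subdivision. *)
Definition on_mesh (M : list (tri * list tri)) (p : pt) : Prop :=
  exists TS, In TS M /\ in_tri (fst TS) p.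

Definition cand_set (F : pt -> R) (M : list (tri * list tri)) (p : pt) : Prop :=
  exists TS T, In TS M /\ In T (snd TS) /\ candidate F T p.

Definition is_min_on (F : pt -> R) (C : pt -> Prop) (e : R) : Prop :=
  (exists c, C c /\ F c = e) /\ (forall c, C c -> e <= F c).
Definition is_max_on (F : pt -> R) (C : pt -> Prop) (e : R) : Prop :=
  (exists c, C c /\ F c = e) /\ (forall c, C c -> F c <= e).

From Stdlib Require Import Reals List ZArith Lra Lia Psatz.
Open Scope R_scope.

(* On a sub-triangle lying in one depth-0 cell, every hat function B((v - g)/w_k)
   is affine in each coordinate, because a depth-0 cell lies inside a single cell
   of every coarser level. Hence H_T is a polynomial in (alpha, beta): it has a
   first-order Taylor expansion with uniformly quadratic remainder on D and is
   Lipschitz there. It therefore attains its maximum and minimum on the triangle D,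
   and at an extremum the Taylor expansion forces the gradient to vanish at an
   interior point and the edge derivative to vanish at a point interior to an
   edge; otherwise the point is a vertex. So both extrema of H_T are attained at
   candidate points, which squeezes f on the mesh between eps1 and eps2. *)

Definition l1_dist (a b a' b' : R) : R := Rabs (a' - a) + Rabs (b' - b).

Lemma l1_dist_nonneg a b a' b' : 0 <= l1_dist a b a' b'.
Proof. unfold l1_dist; pose proof (Rabs_pos (a' - a)); pose proof (Rabs_pos (b' - b)); lra. Qed.

Lemma l1_dist_le_2 a b a' b' : inD a b -> inD a' b' -> l1_dist a b a' b' <= 2.
Proof. unfold inD, l1_dist; intros; split_Rabs; lra. Qed.

Lemma Rabs_mult_le x y X Y : Rabs x <= X -> Rabs y <= Y -> Rabs (x * y) <= X * Y.
Proof.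
  intros Hx Hy; rewrite Rabs_mult.
  apply Rmult_le_compat; auto using Rabs_pos.
Qed.

Definition taylor1_bound (g ga gb : R -> R -> R) (L : R) : Prop :=
  forall a b a' b', inD a b -> inD a' b' ->
    Rabs (g a' b' - g a b - ga a b * (a' - a) - gb a b * (b' - b))
      <= L * (l1_dist a b a' b' * l1_dist a b a' b').

(* A uniform C^{1,1}-type condition on D; every polynomial in (alpha, beta) satisfies it. *)
Definition C11_on_D (g : R -> R -> R) : Prop :=
  exists (ga gb : R -> R -> R) (L M : R), 0 <= L /\ 0 <= M /\
    (forall a b, inD a b -> Rabs (g a b) <= M /\ Rabs (ga a b) <= M /\ Rabs (gb a b) <= M) /\
    taylor1_bound g ga gb L.

Lemma C11_ext_D g h : (forall a b, inD a b -> g a b = h a b) -> C11_on_D h -> C11_on_D g.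
Proof.
  intros E (ga & gb & L & M & HL & HM & Hb & Hr).
  exists ga, gb, L, M; split; [|split; [|split]]; auto.
  - intros a b Hab; rewrite E by exact Hab; exact (Hb a b Hab).
  - intros a b a' b' Hab Hab'; rewrite !E by assumption; exact (Hr a b a' b' Hab Hab').
Qed.

Lemma C11_affine c0 c1 c2 : C11_on_D (fun a b => c0 + c1 * a + c2 * b).
Proof.
  exists (fun _ _ => c1), (fun _ _ => c2), 0, (Rabs c0 + Rabs c1 + Rabs c2).
  pose proof (Rabs_pos c0); pose proof (Rabs_pos c1); pose proof (Rabs_pos c2).
  split; [lra | split; [lra | split]].
  - intros a b [Ha [Hb Hab]].
    assert (Rabs (c1 * a) <= Rabs c1 * 1) by (apply Rabs_mult_le; [lra | apply Rabs_le; lra]).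
    assert (Rabs (c2 * b) <= Rabs c2 * 1) by (apply Rabs_mult_le; [lra | apply Rabs_le; lra]).
    split; [|lra].
    pose proof (Rabs_triang (c0 + c1 * a) (c2 * b)); pose proof (Rabs_triang c0 (c1 * a)); lra.
  - intros a b a' b' _ _.
    replace (c0 + c1 * a' + c2 * b' - (c0 + c1 * a + c2 * b) - c1 * (a' - a) - c2 * (b' - b))
      with 0 by ring.
    rewrite Rabs_R0, Rmult_0_l; lra.
Qed.

Lemma C11_const c : C11_on_D (fun _ _ => c).
Proof. apply C11_ext_D with (fun a b => c + 0 * a + 0 * b); [intros; ring | apply C11_affine]. Qed.

Lemma C11_opp g : C11_on_D g -> C11_on_D (fun a b => - g a b).
Proof.
  intros (ga & gb & L & M & HL & HM & Hb & Hr).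
  exists (fun a b => - ga a b), (fun a b => - gb a b), L, M.
  split; [|split; [|split]]; auto.
  - intros a b Hab; rewrite !Rabs_Ropp; exact (Hb a b Hab).
  - intros a b a' b' Hab Hab'.
    replace (- g a' b' - - g a b - - ga a b * (a' - a) - - gb a b * (b' - b))
      with (- (g a' b' - g a b - ga a b * (a' - a) - gb a b * (b' - b))) by ring.
    rewrite Rabs_Ropp; exact (Hr a b a' b' Hab Hab').
Qed.

Lemma C11_plus g h : C11_on_D g -> C11_on_D h -> C11_on_D (fun a b => g a b + h a b).
Proof.
  intros (ga & gb & Lg & Mg & HLg & HMg & Hbg & Hrg) (ha & hb & Lh & Mh & HLh & HMh & Hbh & Hrh).
  exists (fun a b => ga a b + ha a b), (fun a b => gb a b + hb a b), (Lg + Lh), (Mg + Mh).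
  split; [lra | split; [lra | split]].
  - intros a b Hab.
    destruct (Hbg a b Hab) as (? & ? & ?); destruct (Hbh a b Hab) as (? & ? & ?).
    pose proof (Rabs_triang (g a b) (h a b)); pose proof (Rabs_triang (ga a b) (ha a b));
      pose proof (Rabs_triang (gb a b) (hb a b)).
    repeat split; lra.
  - intros a b a' b' Hab Hab'.
    specialize (Hrg a b a' b' Hab Hab'); specialize (Hrh a b a' b' Hab Hab').
    match goal with |- Rabs ?e <= _ => replace e with
      ((g a' b' - g a b - ga a b * (a' - a) - gb a b * (b' - b)) +
       (h a' b' - h a b - ha a b * (a' - a) - hb a b * (b' - b))) by ring end.
    eapply Rle_trans; [apply Rabs_triang | lra].
Qed.

Lemma taylor1_increment_le g ga gb L M a b a' b' :
  0 <= L -> taylor1_bound g ga gb L -> Rabs (ga a b) <= M -> Rabs (gb a b) <= M ->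
  inD a b -> inD a' b' -> Rabs (g a' b' - g a b) <= (M + 2 * L) * l1_dist a b a' b'.
Proof.
  intros HL Hr Ha Hb Hab Hab'.
  specialize (Hr a b a' b' Hab Hab').
  pose proof (l1_dist_le_2 a b a' b' Hab Hab'); pose proof (l1_dist_nonneg a b a' b').
  assert (Hlin : Rabs (ga a b * (a' - a) + gb a b * (b' - b)) <= M * l1_dist a b a' b').
  { unfold l1_dist; rewrite Rmult_plus_distr_l.
    pose proof (Rabs_triang (ga a b * (a' - a)) (gb a b * (b' - b))).
    pose proof (Rabs_mult_le _ _ _ _ Ha (Rle_refl (Rabs (a' - a)))).
    pose proof (Rabs_mult_le _ _ _ _ Hb (Rle_refl (Rabs (b' - b)))).
    lra. }
  replace (g a' b' - g a b) with ((ga a b * (a' - a) + gb a b * (b' - b)) +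
    (g a' b' - g a b - ga a b * (a' - a) - gb a b * (b' - b))) by ring.
  pose proof (Rabs_triang (ga a b * (a' - a) + gb a b * (b' - b))
    (g a' b' - g a b - ga a b * (a' - a) - gb a b * (b' - b))).
  set (d := l1_dist a b a' b') in *.
  assert (0 <= L * d) by (apply Rmult_le_pos; assumption).
  assert (L * (d * d) <= 2 * L * d) by nra.
  lra.
Qed.

Lemma C11_mult g h : C11_on_D g -> C11_on_D h -> C11_on_D (fun a b => g a b * h a b).
Proof.
  intros (ga & gb & Lg & Mg & HLg & HMg & Hbg & Hrg) (ha & hb & Lh & Mh & HLh & HMh & Hbh & Hrh).
  exists (fun a b => g a b * ha a b + ga a b * h a b),
         (fun a b => g a b * hb a b + gb a b * h a b),
         (Mg * Lh + Mh * Lg + (Mg + 2 * Lg) * (Mh + 2 * Lh)), (2 * (Mg * Mh)).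
  split; [nra | split; [nra | split]].
  - intros a b Hab.
    destruct (Hbg a b Hab) as (G0 & G1 & G2); destruct (Hbh a b Hab) as (H0 & H1 & H2).
    pose proof (Rabs_mult_le _ _ _ _ G0 H0).
    pose proof (Rabs_mult_le _ _ _ _ G0 H1); pose proof (Rabs_mult_le _ _ _ _ G1 H0).
    pose proof (Rabs_mult_le _ _ _ _ G0 H2); pose proof (Rabs_mult_le _ _ _ _ G2 H0).
    pose proof (Rabs_triang (g a b * ha a b) (ga a b * h a b)).
    pose proof (Rabs_triang (g a b * hb a b) (gb a b * h a b)).
    assert (0 <= Mg * Mh) by nra.
    repeat split; lra.
  - intros a b a' b' Hab Hab'.
    destruct (Hbg a b Hab) as (G0 & G1 & G2); destruct (Hbh a b Hab) as (H0 & H1 & H2).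
    pose proof (taylor1_increment_le g ga gb Lg Mg a b a' b' HLg Hrg G1 G2 Hab Hab') as Ug.
    pose proof (taylor1_increment_le h ha hb Lh Mh a b a' b' HLh Hrh H1 H2 Hab Hab') as Uh.
    specialize (Hrg a b a' b' Hab Hab'); specialize (Hrh a b a' b' Hab Hab').
    pose proof (l1_dist_nonneg a b a' b').
    set (d := l1_dist a b a' b') in *.
    set (Rg := g a' b' - g a b - ga a b * (a' - a) - gb a b * (b' - b)) in *.
    set (Rh := h a' b' - h a b - ha a b * (a' - a) - hb a b * (b' - b)) in *.
    match goal with |- Rabs ?e <= _ =>
      replace e with (g a b * Rh + h a b * Rg + (g a' b' - g a b) * (h a' b' - h a b))
        by (unfold Rg, Rh; ring) end.
    pose proof (Rabs_mult_le _ _ _ _ G0 Hrh); pose proof (Rabs_mult_le _ _ _ _ H0 Hrg).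
    pose proof (Rabs_mult_le _ _ _ _ Ug Uh).
    pose proof (Rabs_triang (g a b * Rh + h a b * Rg) ((g a' b' - g a b) * (h a' b' - h a b))).
    pose proof (Rabs_triang (g a b * Rh) (h a b * Rg)).
    nra.
Qed.

Lemma C11_sum_f_R0 (F : nat -> R -> R -> R) n : (forall k, (k <= n)%nat -> C11_on_D (F k)) ->
  C11_on_D (fun a b => sum_f_R0 (fun k => F k a b) n).
Proof.
  induction n as [|n IH]; intros HF; simpl.
  - apply HF; lia.
  - apply C11_plus.
    + apply IH; intros k Hk; apply HF; lia.
    + apply HF; lia.
Qed.

Lemma C11_fold_right {A : Type} (F : A -> R -> R -> R) l : (forall x, C11_on_D (F x)) ->
  C11_on_D (fun a b => fold_right (fun x acc => F x a b + acc) 0 l).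
Proof.
  intros HF; induction l as [|x l IH]; simpl.
  - apply C11_const.
  - apply C11_plus; auto.
Qed.

Definition lipschitz_on_D (g : R -> R -> R) (C : R) : Prop :=
  forall a b a' b', inD a b -> inD a' b' -> Rabs (g a' b' - g a b) <= C * l1_dist a b a' b'.

Lemma C11_lipschitz g : C11_on_D g -> exists C, 0 <= C /\ lipschitz_on_D g C.
Proof.
  intros (ga & gb & L & M & HL & HM & Hb & Hr).
  exists (M + 2 * L); split; [lra|].
  intros a b a' b' Hab Hab'; destruct (Hb a b Hab) as (_ & Ha & Hb').
  exact (taylor1_increment_le g ga gb L M a b a' b' HL Hr Ha Hb' Hab Hab').
Qed.

Lemma lipschitz_continuity_pt (f : R -> R) C c :
  (forall x y, Rabs (f x - f y) <= C * Rabs (x - y)) -> continuity_pt f c.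
Proof.
  intros Hf eps Heps.
  exists (eps / (Rabs C + 1)); split; [apply Rdiv_lt_0_compat; pose proof (Rabs_pos C); lra|].
  intros x [_ Hx]; simpl in *; unfold R_dist in *.
  pose proof (Rabs_pos C); pose proof (Rle_abs C); pose proof (Rabs_pos (x - c)).
  assert (Rabs (x - c) * (Rabs C + 1) < eps).
  { apply (Rmult_lt_compat_r (Rabs C + 1)) in Hx; [|lra].
    replace (eps / (Rabs C + 1) * (Rabs C + 1)) with eps in Hx by (field; lra); lra. }
  specialize (Hf x c); nra.
Qed.

Definition clamp (lo hi x : R) : R := Rmax lo (Rmin hi x).

Lemma clamp_in lo hi x : lo <= hi -> lo <= clamp lo hi x <= hi.
Proof. intros; unfold clamp, Rmax, Rmin; repeat destruct Rle_dec; lra. Qed.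

Lemma clamp_id lo hi x : lo <= x <= hi -> clamp lo hi x = x.
Proof. intros; unfold clamp, Rmax, Rmin; repeat destruct Rle_dec; lra. Qed.

Lemma clamp_lipschitz lo hi x y : lo <= hi -> Rabs (clamp lo hi x - clamp lo hi y) <= Rabs (x - y).
Proof. intros; unfold clamp, Rmax, Rmin; repeat destruct Rle_dec; split_Rabs; lra. Qed.

Section LipschitzMax.

Variables (g : R -> R -> R) (C : R).
Hypotheses (HC : 0 <= C) (Hg : lipschitz_on_D g C).

(* Slicing at [clamp 0 1 x] makes [slice_sup] defined, and Lipschitz, on all of R. *)
Definition slice_values (x y : R) : Prop :=
  exists be, 0 <= be <= 1 - clamp 0 1 x /\ y = g (clamp 0 1 x) be.

Lemma inD_clamp x be : 0 <= be <= 1 - clamp 0 1 x -> inD (clamp 0 1 x) be.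
Proof. pose proof (clamp_in 0 1 x); unfold inD; lra. Qed.

Lemma slice_values_bound x : bound (slice_values x).
Proof.
  exists (g 0 0 + 2 * C); intros y [be [Hbe ->]].
  assert (H00 : inD 0 0) by (unfold inD; lra).
  pose proof (Hg 0 0 _ _ H00 (inD_clamp x be Hbe)).
  pose proof (l1_dist_le_2 _ _ _ _ H00 (inD_clamp x be Hbe)).
  pose proof (l1_dist_nonneg 0 0 (clamp 0 1 x) be).
  split_Rabs; nra.
Qed.

Lemma slice_values_inhabited x : exists y, slice_values x y.
Proof. exists (g (clamp 0 1 x) 0), 0; pose proof (clamp_in 0 1 x); split; [lra | auto]. Qed.

Definition slice_sup (x : R) : R :=
  proj1_sig (completeness _ (slice_values_bound x) (slice_values_inhabited x)).

Lemma slice_sup_is_lub x : is_lub (slice_values x) (slice_sup x).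
Proof. unfold slice_sup; destruct completeness; assumption. Qed.

Lemma slice_sup_le x y : slice_sup x <= slice_sup y + 2 * C * Rabs (x - y).
Proof.
  apply (proj2 (slice_sup_is_lub x)); intros z [be [Hbe ->]].
  set (cx := clamp 0 1 x) in *; set (cy := clamp 0 1 y).
  assert (Hcy : 0 <= cy <= 1) by apply clamp_in, Rle_0_1.
  set (be' := Rmin be (1 - cy)).
  assert (Hbe' : 0 <= be' <= 1 - cy) by (unfold be', Rmin; destruct Rle_dec; lra).
  assert (Hshift : Rabs (be - be') <= Rabs (cx - cy))
    by (unfold be', Rmin; destruct Rle_dec; split_Rabs; lra).
  pose proof (proj1 (slice_sup_is_lub y) (g cy be') (ex_intro _ be' (conj Hbe' eq_refl))).
  pose proof (Hg cy be' cx be (inD_clamp y be' Hbe') (inD_clamp x be Hbe)).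
  pose proof (clamp_lipschitz 0 1 x y Rle_0_1) as Hclamp; fold cx cy in Hclamp.
  unfold l1_dist in *.
  assert (C * (Rabs (cx - cy) + Rabs (be - be')) <= 2 * C * Rabs (x - y)) by nra.
  split_Rabs; lra.
Qed.

Lemma lipschitz_on_D_max : exists a b, inD a b /\ forall a' b', inD a' b' -> g a' b' <= g a b.
Proof.
  assert (Hcont : forall c, continuity_pt slice_sup c).
  { intros c; apply (lipschitz_continuity_pt _ (2 * C)); intros x y.
    pose proof (slice_sup_le x y); pose proof (slice_sup_le y x).
    rewrite (Rabs_minus_sym y x) in *; apply Rabs_le; lra. }
  destruct (continuity_ab_maj slice_sup 0 1 Rle_0_1 (fun c _ => Hcont c)) as [al [Hal Hal01]].
  set (f := fun be => g al (clamp 0 (1 - al) be)).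
  assert (Hin : forall be, inD al (clamp 0 (1 - al) be)).
  { intros be; pose proof (clamp_in 0 (1 - al) be); unfold inD; lra. }
  assert (Hfcont : forall c, continuity_pt f c).
  { intros c; apply (lipschitz_continuity_pt _ C); intros x y; unfold f.
    pose proof (Hg _ _ _ _ (Hin y) (Hin x)); unfold l1_dist in *.
    pose proof (clamp_lipschitz 0 (1 - al) x y ltac:(lra)).
    rewrite Rminus_diag, Rabs_R0, Rplus_0_l in *; nra. }
  destruct (continuity_ab_maj f 0 (1 - al) ltac:(lra) (fun c _ => Hfcont c)) as [be [Hbe Hbe01]].
  assert (Hclal : clamp 0 1 al = al) by (apply clamp_id; lra).
  exists al, (clamp 0 (1 - al) be); split; [apply Hin|].
  intros a' b' Hab'.
  assert (Hslice : slice_values a' (g a' b')).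
  { exists b'; rewrite (clamp_id 0 1 a') by (unfold inD in Hab'; lra).
    unfold inD in Hab'; split; [lra | reflexivity]. }
  pose proof (proj1 (slice_sup_is_lub a') _ Hslice).
  assert (slice_sup a' <= slice_sup al) by (apply Hal; unfold inD in Hab'; lra).
  assert (slice_sup al <= f be).
  { apply (proj2 (slice_sup_is_lub al)); intros z [b0 [Hb0 ->]]; rewrite Hclal in *.
    pose proof (Hbe b0 Hb0) as Hf; unfold f in Hf; rewrite (clamp_id 0 (1 - al) b0) in Hf by lra.
    exact Hf. }
  unfold f in *; lra.
Qed.

End LipschitzMax.

Definition critical_on_D (g : R -> R -> R) (a b : R) : Prop :=
  (inD a b /\ zero_grad_on_D g a b) \/
  (a = 0 /\ 0 <= b <= 1 /\ zero_deriv_on_01 (fun s => g 0 s) b) \/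
  (b = 0 /\ 0 <= a <= 1 /\ zero_deriv_on_01 (fun s => g s 0) a) \/
  (b = 1 - a /\ 0 <= a <= 1 /\ zero_deriv_on_01 (fun s => g s (1 - s)) a) \/
  (a = 0 /\ b = 0) \/ (a = 1 /\ b = 0) \/ (a = 0 /\ b = 1).

Lemma nonpos_of_le_quadratic c L del : 0 <= L -> 0 < del ->
  (forall t, 0 < t < del -> c * t <= L * (t * t)) -> c <= 0.
Proof.
  intros HL Hdel H; destruct (Rle_lt_dec c 0) as [|Hc]; auto.
  set (t := Rmin (del / 2) (c / (L + 1) / 2)).
  assert (Ht0 : 0 < t) by (apply Rmin_pos; apply Rdiv_lt_0_compat; try apply Rdiv_lt_0_compat; lra).
  assert (Htdel : t < del) by (pose proof (Rmin_l (del / 2) (c / (L + 1) / 2)); unfold t; lra).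
  assert (Htc : (L + 1) * t <= c / 2).
  { pose proof (Rmin_r (del / 2) (c / (L + 1) / 2)) as Hr; fold t in Hr.
    apply (Rmult_le_compat_l (L + 1)) in Hr; [|lra].
    replace ((L + 1) * (c / (L + 1) / 2)) with (c / 2) in Hr by (field; lra); lra. }
  specialize (H t (conj Ht0 Htdel)); nra.
Qed.

Lemma quadratic_le_linear_near_0 L eps x : 0 <= L -> 0 < eps -> 0 <= x -> x < eps / (L + 1) ->
  L * (x * x) <= eps * x.
Proof.
  intros HL Heps Hx Hxe.
  apply (Rmult_lt_compat_r (L + 1)) in Hxe; [|lra].
  replace (eps / (L + 1) * (L + 1)) with eps in Hxe by (field; lra).
  nra.
Qed.

Lemma zero_grad_on_D_opp g a b : zero_grad_on_D (fun a b => - g a b) a b -> zero_grad_on_D g a b.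
Proof.
  intros H eps Heps; destruct (H eps Heps) as [del [Hdel Hg]].
  exists del; split; auto; intros a' b' Hab' Hd.
  specialize (Hg a' b' Hab' Hd); rewrite <- Rabs_Ropp.
  replace (- (g a' b' - g a b)) with (- g a' b' - - g a b) by ring; exact Hg.
Qed.

Lemma zero_deriv_on_01_opp h t : zero_deriv_on_01 (fun s => - h s) t -> zero_deriv_on_01 h t.
Proof.
  intros H eps Heps; destruct (H eps Heps) as [del [Hdel Hh]].
  exists del; split; auto; intros s Hs Hd.
  specialize (Hh s Hs Hd); rewrite <- Rabs_Ropp.
  replace (- (h s - h t)) with (- h s - - h t) by ring; exact Hh.
Qed.

Lemma critical_on_D_opp g a b : critical_on_D (fun a b => - g a b) a b -> critical_on_D g a b.
Proof.
  unfold critical_on_D.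
  intuition auto using zero_grad_on_D_opp, zero_deriv_on_01_opp.
Qed.

Section TaylorCritical.

Variables (g ga gb : R -> R -> R) (L : R).
Hypotheses (HL : 0 <= L) (Htaylor : taylor1_bound g ga gb L).

Lemma taylor1_zero_grad a b : inD a b -> ga a b = 0 -> gb a b = 0 -> zero_grad_on_D g a b.
Proof.
  intros Hab HA HB eps Heps.
  exists (eps / (L + 1)); split; [apply Rdiv_lt_0_compat; lra|].
  intros a' b' Hab' Hd.
  pose proof (Htaylor a b a' b' Hab Hab') as Hr.
  rewrite HA, HB, !Rmult_0_l, !Rminus_0_r in Hr.
  pose proof (quadratic_le_linear_near_0 L eps _ HL Heps (l1_dist_nonneg a b a' b') Hd).
  unfold l1_dist in *; lra.
Qed.

Lemma taylor1_edge_zero_deriv (h : R -> R) a0 b0 e1 e2 t :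
  (forall s, 0 <= s <= 1 -> inD (a0 + s * e1) (b0 + s * e2) /\ h s = g (a0 + s * e1) (b0 + s * e2)) ->
  0 <= t <= 1 ->
  ga (a0 + t * e1) (b0 + t * e2) * e1 + gb (a0 + t * e1) (b0 + t * e2) * e2 = 0 ->
  zero_deriv_on_01 h t.
Proof.
  intros Hh Ht Hgrad eps Heps.
  set (L' := L * ((Rabs e1 + Rabs e2) * (Rabs e1 + Rabs e2))).
  assert (HL' : 0 <= L') by (unfold L'; apply Rmult_le_pos; [exact HL | apply Rle_0_sqr]).
  exists (eps / (L' + 1)); split; [apply Rdiv_lt_0_compat; lra|].
  intros s Hs Hst.
  destruct (Hh s Hs) as [HDs ->]; destruct (Hh t Ht) as [HDt ->].
  pose proof (Htaylor _ _ _ _ HDt HDs) as Hr; unfold l1_dist in Hr.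
  replace (a0 + s * e1 - (a0 + t * e1)) with ((s - t) * e1) in Hr by ring.
  replace (b0 + s * e2 - (b0 + t * e2)) with ((s - t) * e2) in Hr by ring.
  set (p := a0 + t * e1) in *; set (q := b0 + t * e2) in *.
  (* along the edge the linear term is [(s - t)] times the vanishing edge derivative *)
  replace (g (a0 + s * e1) (b0 + s * e2) - g p q - ga p q * ((s - t) * e1) - gb p q * ((s - t) * e2))
    with (g (a0 + s * e1) (b0 + s * e2) - g p q - (s - t) * (ga p q * e1 + gb p q * e2)) in Hr
    by ring.
  rewrite Hgrad, Rmult_0_r, Rminus_0_r, !Rabs_mult in Hr.
  replace (L * ((Rabs (s - t) * Rabs e1 + Rabs (s - t) * Rabs e2) *
                (Rabs (s - t) * Rabs e1 + Rabs (s - t) * Rabs e2)))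
    with (L' * (Rabs (s - t) * Rabs (s - t))) in Hr by (unfold L'; ring).
  pose proof (quadratic_le_linear_near_0 L' eps _ HL' Heps (Rabs_pos (s - t)) Hst).
  lra.
Qed.

Variables a b : R.
Hypotheses (Hab : inD a b) (Hmax : forall a' b', inD a' b' -> g a' b' <= g a b).

Lemma taylor1_max_linear_le da db : inD (a + da) (b + db) ->
  ga a b * da + gb a b * db <= L * ((Rabs da + Rabs db) * (Rabs da + Rabs db)).
Proof.
  intros Hab'.
  pose proof (Htaylor a b _ _ Hab Hab') as Hr; unfold l1_dist in Hr.
  replace (a + da - a) with da in Hr by ring; replace (b + db - b) with db in Hr by ring.
  pose proof (Hmax _ _ Hab').
  pose proof (Rle_abs (- (g (a + da) (b + db) - g a b - ga a b * da - gb a b * db))) as Hneg.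
  rewrite Rabs_Ropp in Hneg.
  lra.
Qed.

Lemma taylor1_max_directional e1 e2 del : 0 < del ->
  (forall t, 0 < t < del -> inD (a + t * e1) (b + t * e2) /\ inD (a - t * e1) (b - t * e2)) ->
  ga a b * e1 + gb a b * e2 = 0.
Proof.
  intros Hdel Hin.
  set (L' := L * ((Rabs e1 + Rabs e2) * (Rabs e1 + Rabs e2))).
  assert (HL' : 0 <= L') by (unfold L'; apply Rmult_le_pos; [exact HL | apply Rle_0_sqr]).
  assert (Hfwd : ga a b * e1 + gb a b * e2 <= 0).
  { apply (nonpos_of_le_quadratic _ L' del HL' Hdel); intros t Ht.
    pose proof (taylor1_max_linear_le (t * e1) (t * e2) (proj1 (Hin t Ht))) as H.
    rewrite !Rabs_mult, (Rabs_pos_eq t) in H by lra.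
    replace (L' * (t * t)) with (L * ((t * Rabs e1 + t * Rabs e2) * (t * Rabs e1 + t * Rabs e2)))
      by (unfold L'; ring).
    lra. }
  assert (Hbwd : - (ga a b * e1 + gb a b * e2) <= 0).
  { apply (nonpos_of_le_quadratic _ L' del HL' Hdel); intros t Ht.
    pose proof (taylor1_max_linear_le (- (t * e1)) (- (t * e2)) (proj2 (Hin t Ht))) as H.
    rewrite !Rabs_Ropp, !Rabs_mult, (Rabs_pos_eq t) in H by lra.
    replace (L' * (t * t)) with (L * ((t * Rabs e1 + t * Rabs e2) * (t * Rabs e1 + t * Rabs e2)))
      by (unfold L'; ring).
    lra. }
  lra.
Qed.

Lemma taylor1_max_critical : critical_on_D g a b.
Proof.
  destruct Hab as (Ha & Hb & Hsum).
  destruct (Req_dec a 0) as [Ha0 | Ha0].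
  - destruct (Req_dec b 0) as [Hb0 | Hb0]; [do 4 right; left; auto|].
    destruct (Req_dec b 1) as [Hb1 | Hb1]; [do 6 right; auto|].
    assert (Hgrad : ga a b * 0 + gb a b * 1 = 0).
    { apply (taylor1_max_directional _ _ (Rmin b (1 - b))); [apply Rmin_pos; lra|].
      intros t [Ht0 Ht]; apply Rmin_Rgt_l in Ht; unfold inD; lra. }
    right; left; split; [auto | split; [lra|]].
    apply (taylor1_edge_zero_deriv _ 0 0 0 1); [| lra |].
    + intros s Hs; split; [unfold inD; lra | f_equal; ring].
    + replace (0 + b * 0) with a by lra; replace (0 + b * 1) with b by ring; exact Hgrad.
  - destruct (Req_dec b 0) as [Hb0 | Hb0].
    + destruct (Req_dec a 1) as [Ha1 | Ha1]; [do 5 right; left; auto|].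
      assert (Hgrad : ga a b * 1 + gb a b * 0 = 0).
      { apply (taylor1_max_directional _ _ (Rmin a (1 - a))); [apply Rmin_pos; lra|].
        intros t [Ht0 Ht]; apply Rmin_Rgt_l in Ht; unfold inD; lra. }
      right; right; left; split; [auto | split; [lra|]].
      apply (taylor1_edge_zero_deriv _ 0 0 1 0); [| lra |].
      * intros s Hs; split; [unfold inD; lra | f_equal; ring].
      * replace (0 + a * 1) with a by ring; replace (0 + a * 0) with b by lra; exact Hgrad.
    + destruct (Req_dec (a + b) 1) as [Hab1 | Hab1].
      * assert (Hgrad : ga a b * 1 + gb a b * -1 = 0).
        { apply (taylor1_max_directional _ _ (Rmin a b)); [apply Rmin_pos; lra|].
          intros t [Ht0 Ht]; apply Rmin_Rgt_l in Ht; unfold inD; lra. }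
        right; right; right; left; split; [lra | split; [lra|]].
        apply (taylor1_edge_zero_deriv _ 0 1 1 (-1)); [| lra |].
        -- intros s Hs; split; [unfold inD; lra | f_equal; ring].
        -- replace (0 + a * 1) with a by ring; replace (1 + a * -1) with b by lra; exact Hgrad.
      * assert (Hgrad_a : ga a b * 1 + gb a b * 0 = 0).
        { apply (taylor1_max_directional _ _ (Rmin a (1 - a - b))); [apply Rmin_pos; lra|].
          intros t [Ht0 Ht]; apply Rmin_Rgt_l in Ht; unfold inD; lra. }
        assert (Hgrad_b : ga a b * 0 + gb a b * 1 = 0).
        { apply (taylor1_max_directional _ _ (Rmin b (1 - a - b))); [apply Rmin_pos; lra|].
          intros t [Ht0 Ht]; apply Rmin_Rgt_l in Ht; unfold inD; lra. }
        left; split; [unfold inD; lra|].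
        apply taylor1_zero_grad; [unfold inD | |]; lra.
Qed.

End TaylorCritical.

Lemma C11_max_critical g : C11_on_D g ->
  exists a b, inD a b /\ critical_on_D g a b /\ forall a' b', inD a' b' -> g a' b' <= g a b.
Proof.
  intros Hg.
  destruct (C11_lipschitz g Hg) as [C [HC Hlip]].
  destruct (lipschitz_on_D_max g C HC Hlip) as [a [b [Hab Hmax]]].
  destruct Hg as (ga & gb & L & M & HL & _ & _ & Htaylor).
  exists a, b; split; [exact Hab | split; [|exact Hmax]].
  exact (taylor1_max_critical g ga gb L HL Htaylor a b Hab Hmax).
Qed.

Lemma C11_min_critical g : C11_on_D g ->
  exists a b, inD a b /\ critical_on_D g a b /\ forall a' b', inD a' b' -> g a b <= g a' b'.
Proof.
  intros Hg.
  destruct (C11_max_critical _ (C11_opp g Hg)) as (a & b & Hab & Hcrit & Hmax).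
  exists a, b; split; [exact Hab | split; [exact (critical_on_D_opp g a b Hcrit)|]].
  intros a' b' Hab'; specialize (Hmax a' b' Hab'); lra.
Qed.

Lemma B_affine_on_unit_interval (j : Z) :
  exists c d, forall t, IZR j <= t <= IZR j + 1 -> B t = c + d * t.
Proof.
  destruct (Z_lt_le_dec j (-1)) as [Hj | Hj].
  - exists 0, 0; intros t Ht.
    assert (IZR j <= -2) by (apply IZR_le; lia).
    unfold B; repeat destruct Rle_dec; lra.
  - destruct (Z_lt_le_dec j 0) as [Hj0 | Hj0].
    + replace j with (-1)%Z in * by lia.
      exists 1, 1; intros t Ht; unfold B; repeat destruct Rle_dec; lra.
    + destruct (Z_lt_le_dec j 1) as [Hj1 | Hj1].
      * replace j with 0%Z in * by lia.
        exists 1, (-1); intros t Ht; unfold B; repeat destruct Rle_dec; lra.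
      * exists 0, 0; intros t Ht; apply IZR_le in Hj1.
        unfold B; repeat destruct Rle_dec; lra.
Qed.

Lemma B_affine_on_dyadic_interval (N n : Z) : (0 < N)%Z ->
  exists c d, forall t, IZR n <= t * IZR N <= IZR n + 1 -> B t = c + d * t.
Proof.
  intros HN.
  destruct (B_affine_on_unit_interval (n / N)) as [c [d Hcd]].
  exists c, d; intros t Ht; apply Hcd.
  (* the real interval [n/N, (n+1)/N] lies in [q, q+1] with q = n div N *)
  pose proof (Z.div_mod n N ltac:(lia)); pose proof (Z.mod_pos_bound n N HN).
  assert (Hlo : (N * (n / N) <= n)%Z) by lia.
  assert (Hhi : (n + 1 <= N * (n / N + 1))%Z) by lia.
  apply IZR_le in Hlo, Hhi; rewrite mult_IZR in Hlo, Hhi; rewrite !plus_IZR in Hhi.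
  assert (0 < IZR N) by (apply IZR_lt; exact HN).
  split; nra.
Qed.

Lemma depth0_coord_in_level_cell K k (a g : Z) x : (k <= K)%nat ->
  w K 0 * IZR a <= x <= w K 0 * (IZR a + 1) ->
  IZR (a - g * 2 ^ Z.of_nat k) <= / w K k * (x - w K k * IZR g) * IZR (2 ^ Z.of_nat k)
    <= IZR (a - g * 2 ^ Z.of_nat k) + 1.
Proof.
  intros Hk [Hlo Hhi].
  rewrite minus_IZR, mult_IZR, <- !pow_IZR.
  assert (HK : 2 ^ K = 2 ^ (K - k) * 2 ^ k) by (rewrite <- pow_add; f_equal; lia).
  assert (Hw0 : w K 0 = / 2 ^ K) by (unfold w; rewrite Nat.sub_0_r; reflexivity).
  pose proof (pow_lt 2 K ltac:(lra)); pose proof (pow_lt 2 (K - k) ltac:(lra)).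
  apply (Rmult_le_compat_r (2 ^ K)) in Hlo, Hhi; try lra.
  replace (w K 0 * IZR a * 2 ^ K) with (IZR a) in Hlo by (rewrite Hw0; field; lra).
  replace (w K 0 * (IZR a + 1) * 2 ^ K) with (IZR a + 1) in Hhi by (rewrite Hw0; field; lra).
  replace (/ w K k * (x - w K k * IZR g) * 2 ^ k) with (x * 2 ^ K - IZR g * 2 ^ k)
    by (unfold w; rewrite HK; field; lra).
  lra.
Qed.

Lemma C11_hat_of_depth0_coord K k (a g : Z) (X : R -> R -> R) : (k <= K)%nat -> C11_on_D X ->
  (forall al be, inD al be -> w K 0 * IZR a <= X al be <= w K 0 * (IZR a + 1)) ->
  C11_on_D (fun al be => B (/ w K k * (X al be - w K k * IZR g))).
Proof.
  intros Hk HX Hcell.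
  assert (HN : (0 < 2 ^ Z.of_nat k)%Z) by (apply Z.pow_pos_nonneg; lia).
  destruct (B_affine_on_dyadic_interval _ (a - g * 2 ^ Z.of_nat k) HN) as [c [d Hcd]].
  apply C11_ext_D with (fun al be => (c - d * IZR g) + d * / w K k * X al be).
  - intros al be Hal.
    rewrite Hcd by exact (depth0_coord_in_level_cell K k a g _ Hk (Hcell al be Hal)).
    unfold w; field; apply pow_nonzero; lra.
  - apply C11_plus; [apply C11_const | apply C11_mult; [apply C11_const | exact HX]].
Qed.

Lemma tpar_coords T a b :
  px (tpar T a b) = px (t1 T) + (px (t2 T) - px (t1 T)) * a + (px (t3 T) - px (t1 T)) * b /\
  py (tpar T a b) = py (t1 T) + (py (t2 T) - py (t1 T)) * a + (py (t3 T) - py (t1 T)) * b /\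
  pz (tpar T a b) = pz (t1 T) + (pz (t2 T) - pz (t1 T)) * a + (pz (t3 T) - pz (t1 T)) * b.
Proof. unfold tpar, padd, pscal, psub, px, py, pz; simpl; repeat split; ring. Qed.

Lemma C11_fspl_on_cell K G lam T : in_depth0_cell K T ->
  C11_on_D (fun al be => fspl K G lam (tpar T al be)).
Proof.
  intros [a1 [a2 [a3 Hcell]]].
  assert (Hslab : forall al be, inD al be ->
    w K 0 * IZR a1 <= px (tpar T al be) <= w K 0 * (IZR a1 + 1) /\
    w K 0 * IZR a2 <= py (tpar T al be) <= w K 0 * (IZR a2 + 1) /\
    w K 0 * IZR a3 <= pz (tpar T al be) <= w K 0 * (IZR a3 + 1))
    by (intros al be Hal; apply Hcell; exists al, be; auto).
  assert (Hcoords : C11_on_D (fun al be => px (tpar T al be)) /\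
                    C11_on_D (fun al be => py (tpar T al be)) /\
                    C11_on_D (fun al be => pz (tpar T al be))).
  { repeat split; (eapply C11_ext_D; [intros al be _; apply tpar_coords | apply C11_affine]). }
  unfold fspl.
  apply (C11_sum_f_R0 (fun k al be => fold_right (fun a acc =>
    lam k a * B3 (pscal (/ w K k) (psub (tpar T al be) (gridpt (w K k) a))) + acc) 0 (G k))).
  intros k Hk.
  apply (C11_fold_right (fun a al be =>
    lam k a * B3 (pscal (/ w K k) (psub (tpar T al be) (gridpt (w K k) a))))).
  intros [[g1 g2] g3].
  apply C11_mult; [apply C11_const|].
  unfold B3; cbn [pscal psub gridpt px py pz fst snd].
  destruct Hcoords as (Hx & Hy & Hz).
  apply C11_mult; [apply C11_mult|].
  - apply (C11_hat_of_depth0_coord K k a1); auto; intros al be Hal; apply (Hslab al be Hal).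
  - apply (C11_hat_of_depth0_coord K k a2); auto; intros al be Hal; apply (Hslab al be Hal).
  - apply (C11_hat_of_depth0_coord K k a3); auto; intros al be Hal; apply (Hslab al be Hal).
Qed.

Lemma tpar_vertices T : tpar T 0 0 = t1 T /\ tpar T 1 0 = t2 T /\ tpar T 0 1 = t3 T.
Proof.
  destruct T as [[[[x1 y1] z1] [[x2 y2] z2]] [[x3 y3] z3]].
  unfold tpar, padd, pscal, psub, px, py, pz, t1, t2, t3; simpl.
  repeat split; repeat f_equal; ring.
Qed.

Lemma candidate_of_critical F T a b :
  critical_on_D (fun al be => F (tpar T al be)) a b -> candidate F T (tpar T a b).
Proof.
  unfold candidate; cbv zeta.
  destruct (tpar_vertices T) as (V1 & V2 & V3).
  intros [[Hab Hz] | [(-> & Hb & Hz) | [(-> & Ha & Hz) | [(-> & Ha & Hz) |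
          [[-> ->] | [[-> ->] | [-> ->]]]]]]].
  - left; exists a, b; auto.
  - right; left; exists b; auto.
  - right; right; left; exists a; auto.
  - right; right; right; left; exists a; auto.
  - do 4 right; left; exact V1.
  - do 5 right; left; exact V2.
  - do 6 right; exact V3.
Qed.

Theorem theorem1 (K : nat) (G : nat -> list zpt) (lam : nat -> zpt -> R)
  (M : list (tri * list tri)) (e1 e2 : R) :
  (forall k, (k <= K)%nat -> NoDup (G k)) ->
  (forall TS, In TS M -> nondegenerate (fst TS) /\ valid_subdivision K (fst TS) (snd TS)) ->
  is_min_on (fspl K G lam) (cand_set (fspl K G lam) M) e1 ->
  is_max_on (fspl K G lam) (cand_set (fspl K G lam) M) e2 ->
  forall v, on_mesh M v -> e1 <= fspl K G lam v <= e2.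
Proof.
  intros _ Hmesh Hmin Hmax v [TS [HTS Hv]].
  destruct (Hmesh TS HTS) as [_ [Hsub [Hcover _]]].
  destruct (proj1 (Hcover v) Hv) as [T [HT [al [be [Hal ->]]]]].
  pose proof (C11_fspl_on_cell K G lam T (proj2 (Hsub T HT))) as HH.
  assert (Hcand : forall a b, critical_on_D (fun a b => fspl K G lam (tpar T a b)) a b ->
                    cand_set (fspl K G lam) M (tpar T a b))
    by (intros a b Hc; exists TS, T; auto using candidate_of_critical).
  split.
  - destruct (C11_min_critical _ HH) as (a & b & _ & Hc & Hle).
    pose proof (proj2 Hmin _ (Hcand a b Hc)); pose proof (Hle al be Hal); lra.
  - destruct (C11_max_critical _ HH) as (a & b & _ & Hc & Hle).
    pose proof (proj2 Hmax _ (Hcand a b Hc)); pose proof (Hle al be Hal); lra.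
Qed.
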